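(* Let $f:\mathbb{R}^n\to\mathbb{R}$ be convex and $L$-smooth for some $L>0$, and suppose $f$ has a minimizer $x^\star\in\mathbb{R}^n$. Let $\{x^k\}$, $\{t_k\}$ be generated by APBM with models $\hat f^k$ satisfying, for every $k\ge1$: (a) $\hat f^k$ is convex; (b) $\hat f^k(x)\ge f(y^k)+\langle\nabla f(y^k),x-y^k\rangle$ for all $x\in\mathbb{R}^n$; (c) $\hat f^k(x)\le f(x)$ for all $x\in\mathbb{R}^n$. Then for every $k\ge1$, $$f(x^k)-f(x^\star)\le\frac{L\|x^0-x^\star\|^2}{2t_k^2}.$$
   Context: APBM (accelerated proximal bundle method) for minimizing $f$: given $L>0$ and an initial point $x^0\in\mathbb{R}^n$, set $y^1=x^0$ and $t_1=1$. For $k=1,2,\dots$, given a model $\hat f^k:\mathbb{R}^n\to\mathbb{R}$, set $x^k=\arg\min_{x\in\mathbb{R}^n}\ \hat f^k(x)+\frac{L}{2}\|x-y^k\|^2$, $t_{k+1}=\frac{1+\sqrt{1+4t_k^2}}{2}$, $y^{k+1}=x^k+\frac{t_k-1}{t_{k+1}}(x^k-x^{k-1})$. A differentiable $f$ is $L$-smooth if $\|\nabla f(x)-\nabla f(y)\|\le L\|x-y\|$ for all $x,y\in\mathbb{R}^n$ (Euclidean norm). *)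

From HB Require Import structures.
From mathcomp Require Import all_boot all_order all_algebra.
From mathcomp Require Import all_classical all_reals all_analysis.
Set Implicit Arguments. Unset Strict Implicit. Unset Printing Implicit Defensive.
Import Order.TTheory GRing.Theory Num.Theory.
Import numFieldNormedType.Exports.
Local Open Scope ring_scope.

Definition dotv {R : realType} {n : nat} (u v : 'rV[R]_n) : R :=
  \sum_(i < n) u 0 i * v 0 i.
Definition enorm {R : realType} {n : nat} (u : 'rV[R]_n) : R :=
  Num.sqrt (dotv u u).

Definition grad {R : realType} {n : nat} (f : 'rV[R]_n -> R) (x : 'rV[R]_n)
  : 'rV[R]_n := \row_(i < n) ('D_(delta_mx 0 i) f) x.

Definition convex_fun {R : realType} {n : nat} (f : 'rV[R]_n -> R) : Prop :=
  forall (x y : 'rV[R]_n) (l : R), 0 <= l -> l <= 1 ->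
    f (l *: x + (1 - l) *: y) <= l * f x + (1 - l) * f y.

Definition L_smooth {R : realType} {n : nat} (L : R) (f : 'rV[R]_n -> R) : Prop :=
  (forall x, differentiable f x) /\
  forall x y, enorm (grad f x - grad f y) <= L * enorm (x - y).

Definition APBM {R : realType} {n : nat} (L : R)
  (fhat : nat -> 'rV[R]_n -> R) (x y : nat -> 'rV[R]_n) (t : nat -> R) : Prop :=
  y 1%N = x 0%N /\ t 1%N = 1 /\
  forall k : nat, (1 <= k)%N ->
    (forall z, fhat k (x k) + L / 2 * enorm (x k - y k) ^+ 2
               <= fhat k z + L / 2 * enorm (z - y k) ^+ 2) /\
    t k.+1 = (1 + Num.sqrt (1 + 4 * t k ^+ 2)) / 2 /\
    y k.+1 = x k + ((t k - 1) / t k.+1) *: (x k - x k.-1).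

(* The model sandwich [f(y^k) + <grad f(y^k), . - y^k> <= fhat^k <= f] and the descent
   lemma for L-smooth f make the bundle step behave like a proximal-gradient step:
   f(x^k) <= f(z) + L/2 (|z - y^k|^2 - |z - x^k|^2) for every z.  Applied at
   z = x⋆ / t_(k+1) + (1 - 1/t_(k+1)) x^k and multiplied by t_(k+1)^2, this makes the
   FISTA energy t_k^2 (f(x^k) - f(x⋆)) + L/2 |t_k x^k - (t_k - 1) x^(k-1) - x⋆|^2
   nonincreasing, because t_(k+1)^2 - t_(k+1) = t_k^2; its value at k = 1 is at most
   L/2 |x^0 - x⋆|^2. *)
From HB Require Import structures.
From mathcomp Require Import all_boot all_order all_algebra.
From mathcomp Require Import all_classical all_reals all_analysis.
From mathcomp Require Import ring lra.
Import Order.TTheory GRing.Theory Num.Theory.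
Import numFieldNormedType.Exports.
Local Open Scope ring_scope.
Set Implicit Arguments. Unset Strict Implicit.

Section InnerProduct.
Variables (R : realType) (n : nat).
Implicit Types (u v w : 'rV[R]_n) (c : R).

Lemma dotvC u v : dotv u v = dotv v u.
Proof. by apply: eq_bigr => i _; rewrite mulrC. Qed.

Lemma dotvDl u v w : dotv (u + v) w = dotv u w + dotv v w.
Proof. by rewrite /dotv -big_split; apply: eq_bigr => i _; rewrite mxE mulrDl. Qed.

Lemma dotvZl c u w : dotv (c *: u) w = c * dotv u w.
Proof. by rewrite /dotv mulr_sumr; apply: eq_bigr => i _; rewrite mxE mulrA. Qed.

Lemma dotvNl u w : dotv (- u) w = - dotv u w.
Proof. by rewrite -scaleN1r dotvZl mulN1r. Qed.

Lemma dotvBl u v w : dotv (u - v) w = dotv u w - dotv v w.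
Proof. by rewrite dotvDl dotvNl. Qed.

Lemma dotvDr u v w : dotv w (u + v) = dotv w u + dotv w v.
Proof. by rewrite dotvC dotvDl !(dotvC w). Qed.

Lemma dotvZr c u w : dotv w (c *: u) = c * dotv w u.
Proof. by rewrite dotvC dotvZl dotvC. Qed.

Lemma dotvNr u w : dotv w (- u) = - dotv w u.
Proof. by rewrite dotvC dotvNl dotvC. Qed.

Lemma dotvNN u : dotv (- u) (- u) = dotv u u.
Proof. by rewrite dotvNl dotvNr opprK. Qed.

Lemma dotvZZ c u : dotv (c *: u) (c *: u) = c ^+ 2 * dotv u u.
Proof. by rewrite dotvZl dotvZr mulrA expr2. Qed.

Lemma dotvDD u v : dotv (u + v) (u + v) = dotv u u + 2 * dotv u v + dotv v v.
Proof. by rewrite dotvDl !dotvDr (dotvC v u); ring. Qed.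

Lemma dotvBB_sym u v : dotv (u - v) (u - v) = dotv (v - u) (v - u).
Proof. by rewrite -opprB dotvNN. Qed.

Lemma dotv_ge0 u : 0 <= dotv u u.
Proof. by apply: sumr_ge0 => i _; rewrite -expr2 sqr_ge0. Qed.

Lemma enorm_sqr u : enorm u ^+ 2 = dotv u u.
Proof. by rewrite /enorm sqr_sqrtr // dotv_ge0. Qed.

(* Coordinatewise AM-GM: [2 m u_i v_i <= u_i^2 + m^2 v_i^2]. *)
Lemma dotv_le_scaled u v (m : R) :
  0 < m -> dotv u u <= m ^+ 2 * dotv v v -> dotv u v <= m * dotv v v.
Proof.
move=> m_gt0 uv.
have amgm : 2 * m * dotv u v <= dotv u u + m ^+ 2 * dotv v v.
  rewrite /dotv !mulr_sumr -big_split; apply: ler_sum => i _ /=.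
  rewrite -subr_ge0.
  have -> : u 0 i * u 0 i + m ^+ 2 * (v 0 i * v 0 i) - 2 * m * (u 0 i * v 0 i)
     = (u 0 i - m * v 0 i) ^+ 2 by ring.
  exact: sqr_ge0.
have := dotv_ge0 v; nra.
Qed.

End InnerProduct.

Section Smoothness.
Variables (R : realType) (n : nat).
Implicit Types (f : 'rV[R]_n -> R) (y z d : 'rV[R]_n).

Lemma deriveE_grad f y d : differentiable f y -> 'D_d f y = dotv (grad f y) d.
Proof.
move=> df; rewrite deriveE // /dotv {1}(row_sum_delta d) linear_sum.
by apply: eq_bigr => i _; rewrite linearZ /= mxE deriveE // mulrC.
Qed.

Lemma is_derive_line f y d (s : R) : differentiable f (y + s *: d) ->
  is_derive s 1 (fun s : R => f (y + s *: d)) ('D_d f (y + s *: d)).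
Proof.
move=> df.
have quotient_eq : (fun h : R => h^-1 *: (((fun s : R => f (y + s *: d)) \o shift s) (h *: 1)
                                          - f (y + s *: d)))
   = (fun h => h^-1 *: ((f \o shift (y + s *: d)) (h *: d) - f (y + s *: d))).
  apply: funext => h /=; congr (_ *: (f _ - _)).
  by rewrite [_%:A]mulr1 scalerDl addrCA.
split; first by rewrite /derivable quotient_eq; exact: diff_derivable.
by rewrite /derive quotient_eq.
Qed.

Lemma is_derive_quadratic (a b s : R) :
  is_derive s 1 (fun s => a * s + b * s ^+ 2) (a + b * (2 * s)).
Proof.
have -> : (fun s => a * s + b * s ^+ 2) = (a \*: id) + (b \*: (id ^+ 2)).
  by apply: funext => r /=; rewrite !fctE.
by apply: is_derive_eq; rewrite /= expr1 ![_%:A]mulr1.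
Qed.

Lemma L_smooth_derive_line_le f (L s : R) y d : L_smooth L f -> 0 < L -> 0 < s ->
  'D_d f (y + s *: d) - dotv (grad f y) d <= L * s * dotv d d.
Proof.
case=> df grad_lip L_gt0 s_gt0.
set g := grad f (y + s *: d) - grad f y.
have gg : dotv g g <= (L * s) ^+ 2 * dotv d d.
  have := grad_lip (y + s *: d) y; rewrite addrAC subrr add0r => lip.
  have : enorm g ^+ 2 <= (L * enorm (s *: d)) ^+ 2.
    by rewrite !expr2; exact: (ler_pM (sqrtr_ge0 _) (sqrtr_ge0 _) lip lip).
  by rewrite enorm_sqr exprMn enorm_sqr dotvZZ exprMn mulrA.
have := dotv_le_scaled (mulr_gt0 L_gt0 s_gt0) gg.
by rewrite /g dotvBl deriveE_grad.
Qed.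

Lemma L_smooth_descent f (L : R) y z : L_smooth L f -> 0 < L ->
  f z <= f y + dotv (grad f y) (z - y) + L / 2 * dotv (z - y) (z - y).
Proof.
move=> smooth L_gt0; have [df _] := smooth.
set d := z - y; set a := dotv (grad f y) d; set b := L / 2 * dotv d d.
pose g := (fun s : R => f (y + s *: d)) - (fun s => a * s + b * s ^+ 2).
have g_derive (s : R) : is_derive s 1 g ('D_d f (y + s *: d) - (a + b * (2 * s))).
  by apply: is_deriveB; [exact: is_derive_line | exact: is_derive_quadratic].
have g_decr : g 1 <= g 0.
  apply: (@ler0_derive1_le_cc _ g 0 1) => //.
  - move=> s; rewrite in_itv /= => /andP[s_gt0 _].
    rewrite derive1E; case: (g_derive s) => _ ->.
    have := L_smooth_derive_line_le y d smooth L_gt0 s_gt0.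
    have -> : b * (2 * s) = L * s * dotv d d by rewrite /b; field.
    by rewrite -/a; lra.
  - by apply: derivable_within_continuous => s _; case: (g_derive s).
  - by rewrite in_itv /= lexx ler01.
  - by rewrite in_itv /= lexx ler01.
move: g_decr; rewrite /g !fctE scale0r addr0 scale1r /d addrCA subrr addr0.
by rewrite expr1n expr0n /= !mulr1 !mulr0; lra.
Qed.

End Smoothness.

Lemma ge0_of_add_small_ge0 (R : realFieldType) (a b : R) : 0 <= b ->
  (forall lam, 0 < lam -> lam <= 1 -> 0 <= a + lam * b) -> 0 <= a.
Proof.
move=> b_ge0 small; rewrite leNgt; apply/negP => a_lt0.
have c_gt0 : 0 < - a + b by lra.
set lam := - a / (- a + b).
have lam_gt0 : 0 < lam by rewrite divr_gt0 // oppr_gt0.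
have lam_le1 : lam <= 1 by rewrite ler_pdivrMr // mul1r; lra.
have key : (- a + b) * (a + lam * b) = - a ^+ 2.
  by rewrite /lam; field; exact: lt0r_neq0.
have := mulr_ge0 (ltW c_gt0) (small lam lam_gt0 lam_le1).
rewrite key; nra.
Qed.

Section ProximalStep.
Variables (R : realType) (n : nat) (L : R) (h : 'rV[R]_n -> R) (xk yk : 'rV[R]_n).
Hypotheses (L_gt0 : 0 < L) (h_convex : convex_fun h).
Hypothesis xk_min : forall w,
  h xk + L / 2 * enorm (xk - yk) ^+ 2 <= h w + L / 2 * enorm (w - yk) ^+ 2.

(* Compare [xk] with the points of the segment [xk, z] arbitrarily close to [xk]. *)
Lemma prox_optimality z : h xk <= h z + L * dotv (xk - yk) (z - xk).
Proof.
set u := xk - yk; set w := z - xk.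
suff : 0 <= h z - h xk + L * dotv u w by lra.
apply: (@ge0_of_add_small_ge0 _ _ (L / 2 * dotv w w)).
  by rewrite mulr_ge0 ?dotv_ge0 // divr_ge0 // ltW.
move=> lam lam_gt0 lam_le1.
have := h_convex z xk (ltW lam_gt0) lam_le1.
have := xk_min (lam *: z + (1 - lam) *: xk).
have -> : lam *: z + (1 - lam) *: xk - yk = u + lam *: w.
  by apply/rowP => i; rewrite !mxE; ring.
rewrite !enorm_sqr -/u (dotvDD u) dotvZZ dotvZr => mn cv.
suff : 0 <= lam * (h z - h xk + L * dotv u w + lam * (L / 2 * dotv w w)).
  by rewrite pmulr_rge0.
lra.
Qed.

Lemma prox_three_point z :
  h xk + L / 2 * dotv (xk - yk) (xk - yk) + L / 2 * dotv (z - xk) (z - xk)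
    <= h z + L / 2 * dotv (z - yk) (z - yk).
Proof.
have -> : z - yk = (z - xk) + (xk - yk) by rewrite addrA subrK.
rewrite (dotvDD (z - xk)) (dotvC (z - xk)).
have := prox_optimality z; lra.
Qed.

Variable f : 'rV[R]_n -> R.
Hypotheses (f_smooth : L_smooth L f)
  (h_lower : forall w, f yk + dotv (grad f yk) (w - yk) <= h w)
  (h_upper : forall w, h w <= f w).

Lemma model_step_bound z :
  f xk <= f z + L / 2 * (dotv (z - yk) (z - yk) - dotv (z - xk) (z - xk)).
Proof.
have := L_smooth_descent yk xk f_smooth L_gt0.
have := h_lower xk; have := prox_three_point z; have := h_upper z.
lra.
Qed.

End ProximalStep.

Section Momentum.
Variable R : rcfType.

Definition momentum (s : R) : R := (1 + Num.sqrt (1 + 4 * s ^+ 2)) / 2.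

Lemma momentum_ge1 s : 1 <= momentum s.
Proof.
suff : 1 <= Num.sqrt (1 + 4 * s ^+ 2) by rewrite /momentum; lra.
rewrite -{1}sqrtr1 ler_sqrt; last by rewrite addr_ge0 // mulr_ge0 // sqr_ge0.
by rewrite lerDl mulr_ge0 // sqr_ge0.
Qed.

Lemma momentum_sqr_sub s : momentum s ^+ 2 - momentum s = s ^+ 2.
Proof.
rewrite /momentum; set r := Num.sqrt _.
have r_sqr : r ^+ 2 = 1 + 4 * s ^+ 2.
  by rewrite sqr_sqrtr // addr_ge0 // mulr_ge0 // sqr_ge0.
have -> : s ^+ 2 = (r ^+ 2 - 1) / 4 by rewrite r_sqr; field.
by field.
Qed.

End Momentum.

Section APBMConvergence.
Variables (R : realType) (n : nat) (f : 'rV[R]_n -> R) (L : R) (xstar : 'rV[R]_n).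
Variables (fhat : nat -> 'rV[R]_n -> R) (x y : nat -> 'rV[R]_n) (t : nat -> R).
Hypotheses (L_gt0 : 0 < L) (f_convex : convex_fun f) (f_smooth : L_smooth L f).
Hypothesis apbm : APBM L fhat x y t.
Hypothesis models : forall k : nat, (1 <= k)%N ->
  convex_fun (fhat k) /\
  (forall z, f (y k) + dotv (grad f (y k)) (z - y k) <= fhat k z) /\
  (forall z, fhat k z <= f z).

Lemma apbm_step_bound k z : (1 <= k)%N ->
  f (x k) <= f z + L / 2 * (dotv (z - y k) (z - y k) - dotv (z - x k) (z - x k)).
Proof.
move=> k_ge1; have [h_convex [h_lower h_upper]] := models k_ge1.
have [_ [_ /(_ k k_ge1) [xk_min _]]] := apbm.
exact: (model_step_bound L_gt0 h_convex xk_min f_smooth h_lower h_upper).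
Qed.

Lemma apbm_t_succ k : (1 <= k)%N -> t k.+1 = momentum (t k).
Proof. by move=> k_ge1; have [_ [_ /(_ k k_ge1) [_ []]]] := apbm. Qed.

Lemma apbm_t_ge1 k : (1 <= k)%N -> 1 <= t k.
Proof.
case: k => [//|[|k] _]; first by have [_ [-> _]] := apbm.
by rewrite apbm_t_succ // momentum_ge1.
Qed.

Definition apbm_gap k := t k *: x k - (t k - 1) *: x k.-1 - xstar.

Definition apbm_energy k :=
  t k ^+ 2 * (f (x k) - f xstar) + L / 2 * dotv (apbm_gap k) (apbm_gap k).

Lemma apbm_energy1 : apbm_energy 1 <= L / 2 * dotv (x 0 - xstar) (x 0 - xstar).
Proof.
have [y1 [t1 _]] := apbm.
have := apbm_step_bound xstar (isT : (1 <= 1)%N).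
rewrite /apbm_energy /apbm_gap t1 subrr scale0r subr0 scale1r expr1n mul1r.
rewrite y1 (dotvBB_sym xstar) (dotvBB_sym xstar).
lra.
Qed.

Lemma apbm_energy_succ_le j : (1 <= j)%N -> apbm_energy j.+1 <= apbm_energy j.
Proof.
move=> j_ge1; have [_ [_ /(_ j j_ge1) [_ [_ y_succ]]]] := apbm.
set T := t j.+1.
have T_gt0 : 0 < T by have := apbm_t_ge1 (isT : (1 <= j.+1)%N); rewrite -/T; lra.
have T_sqr_sub : T ^+ 2 - T = t j ^+ 2 by rewrite /T apbm_t_succ // momentum_sqr_sub.
pose z := T^-1 *: xstar + (1 - T^-1) *: x j.
have dist_y : T ^+ 2 * dotv (z - y j.+1) (z - y j.+1) = dotv (apbm_gap j) (apbm_gap j).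
  rewrite -(dotvNN (apbm_gap j)).
  suff <- : T *: (z - y j.+1) = - apbm_gap j by rewrite dotvZZ.
  rewrite y_succ /z /apbm_gap -/T; apply/rowP => i; rewrite !mxE.
  by field; exact: lt0r_neq0.
have dist_x :
    T ^+ 2 * dotv (z - x j.+1) (z - x j.+1) = dotv (apbm_gap j.+1) (apbm_gap j.+1).
  rewrite -(dotvNN (apbm_gap j.+1)).
  suff <- : T *: (z - x j.+1) = - apbm_gap j.+1 by rewrite dotvZZ.
  rewrite /z /apbm_gap -/T /=; apply/rowP => i; rewrite !mxE.
  by field; exact: lt0r_neq0.
have f_z_le : T ^+ 2 * (f z - f xstar) <= t j ^+ 2 * (f (x j) - f xstar).
  have Tinv_le1 : T^-1 <= 1 by rewrite invf_le1 // apbm_t_ge1.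
  have Tinv_ge0 : 0 <= T^-1 by rewrite invr_ge0 ltW.
  have := f_convex xstar (x j) Tinv_ge0 Tinv_le1.
  have -> : t j ^+ 2 = T ^+ 2 * (1 - T^-1).
    by rewrite -T_sqr_sub; field; exact: lt0r_neq0.
  rewrite -/z -mulrA => z_convex.
  by apply: ler_wpM2l; [exact: sqr_ge0 | lra].
have := ler_wpM2l (sqr_ge0 T) (apbm_step_bound z (isT : (1 <= j.+1)%N)).
rewrite /apbm_energy -/T -dist_y -dist_x.
lra.
Qed.

Lemma apbm_energy_le k :
  (1 <= k)%N -> apbm_energy k <= L / 2 * dotv (x 0 - xstar) (x 0 - xstar).
Proof.
elim: k => [//|[|k] IH _]; first exact: apbm_energy1.
exact: le_trans (apbm_energy_succ_le (j := k.+1) isT) (IH isT).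
Qed.

End APBMConvergence.

Theorem theorem1 (R : realType) (n : nat) (f : 'rV[R]_n -> R) (L : R)
  (xstar : 'rV[R]_n)
  (fhat : nat -> 'rV[R]_n -> R) (x y : nat -> 'rV[R]_n) (t : nat -> R) :
  0 < L ->
  convex_fun f ->
  L_smooth L f ->
  (forall z, f xstar <= f z) ->
  APBM L fhat x y t ->
  (forall k : nat, (1 <= k)%N ->
     convex_fun (fhat k) /\
     (forall z, f (y k) + dotv (grad f (y k)) (z - y k) <= fhat k z) /\
     (forall z, fhat k z <= f z)) ->
  forall k : nat, (1 <= k)%N ->
    f (x k) - f xstar <= L * enorm (x 0%N - xstar) ^+ 2 / (2 * t k ^+ 2).
Proof.
move=> L_gt0 f_convex f_smooth _ apbm models k k_ge1.
have t_ge1 := apbm_t_ge1 apbm k_ge1.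
have := apbm_energy_le xstar L_gt0 f_convex f_smooth apbm models k_ge1.
have := dotv_ge0 (apbm_gap xstar x t k).
rewrite /apbm_energy ler_pdivlMr ?enorm_sqr; first by nra.
by rewrite mulr_gt0 // exprn_gt0 //; lra.
Qed.
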